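(* Let $(a_i)_{i\in\mathbb Z},(b_i)_{i\in\mathbb Z}$ be finitely supported sequences of integers and put $q_i=a_i-b_i$. The following three sets of conditions are equivalent. (1) With $q_\sigma$ the lowest nonzero $q_i$: (a) $a_l=0$ for $l<\sigma$; (b) $a_\sigma=q_\sigma>0$; (c) $\max(q_l,0)\le a_l<\sum_{i\le l}q_i$ for $l>\sigma$. (2) With $a_\sigma$ the lowest nonzero $a_i$: (a) all $a_i,b_i$ are nonnegative; (b) $b_i=0$ for $i\le\sigma$; (c) $\sum_{i\le l}b_i<\sum_{i<l}a_i$ for all $l>\sigma$. (3) With $m=\sum_ia_i$, $n=\sum_ib_i$: (a) all $a_i,b_i$ are nonnegative; (b) $n<m$; (c) for all $(\alpha,\beta)\in R_{m,n}$ with $\beta\ge\alpha-1$ one has $(\alpha,\beta)\in L_{a,b}$.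
   Context: For positive integers $m,n$, $R_{m,n}=\{(\alpha,\beta)\in\mathbb Z^2\mid1\le\alpha\le m,\ 1\le\beta\le n\}$. For a finitely supported sequence $(c_i)$ of nonnegative integers, $S(c)$ is the nondecreasing finite sequence of integers in which each integer $i$ appears exactly $c_i$ times, indexed starting from $1$ (so $S(c)$ has length $\sum_ic_i$). For nonnegative finitely supported $(a_i),(b_i)$ with $m=\sum_ia_i$, $n=\sum_ib_i$, put $L_{a,b}=\{(\alpha,\beta)\in R_{m,n}\mid S(a)_\alpha<S(b)_\beta\}$. *)

(* Finitely supported integer sequences indexed by Z are
   represented as functions int -> int together with an explicit bound N
   such that the support lies in [-N, N]; all sums over Z are taken over
   this window (terms outside are zero, so the value does not depend on N). *)
From mathcomp Require Import all_boot all_order all_algebra.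
Set Implicit Arguments. Unset Strict Implicit. Unset Printing Implicit Defensive.
Import Order.TTheory GRing.Theory Num.Theory.
Local Open Scope ring_scope.

Definition window (N : nat) : seq int :=
  [seq (k%:Z - N%:Z) | k <- iota 0 (N.*2.+1)].

Definition psum_le (N : nat) (c : int -> int) (l : int) : int :=
  \sum_(i <- window N | i <= l) c i.
Definition psum_lt (N : nat) (c : int -> int) (l : int) : int :=
  \sum_(i <- window N | i < l) c i.
Definition tsum (N : nat) (c : int -> int) : int :=
  \sum_(i <- window N) c i.

(* S(c): nondecreasing sequence where each i appears c_i times
   (c is assumed nonnegative where used; `|c i| is used to get a nat). *)
Definition Sseq (N : nat) (c : int -> int) : seq int :=
  flatten [seq nseq `|c i|%N i | i <- window N].

(* S(c)_alpha, indexed from 1 *)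
Definition Sat (N : nat) (c : int -> int) (alpha : nat) : int :=
  nth 0 (Sseq N c) alpha.-1.

Definition inR (m n : int) (alpha beta : nat) : Prop :=
  [/\ (1 <= alpha)%N, alpha%:Z <= m, (1 <= beta)%N & beta%:Z <= n].

Definition inL (N : nat) (a b : int -> int) (alpha beta : nat) : Prop :=
  inR (tsum N a) (tsum N b) alpha beta /\ Sat N a alpha < Sat N b beta.

(* Since S(c) is sorted and lists each i exactly c_i times, S(c)_alpha < l
   holds iff alpha <= sum_{i<l} c_i (lemma [Sat_lt]); this turns the lattice
   condition (3c) into inequalities between partial sums of a and b.
   (1) <-> (2) is then the identity sum_{i<=l} q_i = sum_{i<l} a_i + a_l -
   sum_{i<=l} b_i.  For (2) -> (3), given beta put L := S(b)_beta; then
   beta <= sum_{i<=L} b_i < sum_{i<L} a_i.  For (3) -> (2), sigma is S(a)_1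
   and the lattice points (k+1, k) with k = sum_{i<=l} b_i give (2c). *)

From mathcomp Require Import all_boot all_order all_algebra zify.
Import Order.TTheory GRing.Theory Num.Theory.
Set Implicit Arguments. Unset Strict Implicit. Unset Printing Implicit Defensive.
Local Open Scope ring_scope.

Section SortedSeq.
Variables (d : Order.disp_t) (T : orderType d).
Local Open Scope order_scope.

Lemma sorted_nth_lt (x0 l : T) (s : seq T) k :
  sorted <=%O s -> (k < size s)%N ->
  (nth x0 s k < l) = (k < count (< l) s)%N.
Proof.
case: s => [//|x s]; elim: s x k => [|y s IH] x k sorted_xs lt_k.
  by case: k lt_k => //= _; rewrite addn0; case: (x < l).
have [x_lt_l|l_le_x] := ltP x l.
  case: k lt_k => [|k] /=; first by rewrite x_lt_l.
  case/andP: sorted_xs => _ sorted_ys; rewrite !ltnS => lt_k.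
  by rewrite (IH y k) //= x_lt_l.
have ge_x := order_path_min le_trans sorted_xs.
have not_lt_l z : z \in x :: y :: s -> (z < l) = false.
  rewrite inE => /predU1P[->|z_in]; first by rewrite ltNge l_le_x.
  by apply/negbTE; rewrite -leNgt (le_trans l_le_x) //; move/allP: ge_x; apply.
by rewrite not_lt_l ?mem_nth // (eq_in_count (a2 := pred0)) ?count_pred0.
Qed.

Lemma sorted_flatten_nseq (f : T -> nat) (r : seq T) :
  sorted <=%O r -> sorted <=%O (flatten [seq nseq (f x) x | x <- r]).
Proof.
rewrite !le_sorted_pairwise; elim: r => //= x r IH /andP[x_le_r pw_r].
rewrite pairwise_cat IH // andbT; apply/andP; split.
  apply/allrelP => y z; rewrite mem_nseq => /andP[_ /eqP->].
  case/flatten_mapP=> w w_in; rewrite mem_nseq => /andP[_ /eqP->].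
  by move/allP: x_le_r; apply.
by elim: (f x) => //= n ->; rewrite all_nseq lexx orbT.
Qed.

End SortedSeq.

Lemma count_flatten_nseq (T : Type) (f : T -> nat) (P : pred T) (r : seq T) :
  count P (flatten [seq nseq (f x) x | x <- r]) = (\sum_(x <- r | P x) f x)%N.
Proof.
elim: r => [|x r IH]; first by rewrite big_nil.
by rewrite big_cons /= count_cat count_nseq IH; case: (P x); rewrite ?mul1n ?mul0n.
Qed.

Lemma mem_window N i : (i \in window N) = (- N%:Z <= i <= N%:Z).
Proof.
apply/mapP/idP => [[k] | /andP[N_le_i i_le_N]].
  by rewrite mem_iota => /andP[_ lt_k] ->; apply/andP; split; lia.
by exists (absz (i + N%:Z)); [rewrite mem_iota; apply/andP; split | ]; lia.
Qed.

Lemma window_uniq N : uniq (window N).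
Proof. by rewrite map_inj_uniq ?iota_uniq // => x y /=; lia. Qed.

Lemma window_sorted N : sorted <=%R (window N).
Proof. by rewrite sorted_map; apply: sub_sorted (iota_sorted 0 _) => x y /=; lia. Qed.

Section PartialSums.
Variables (N : nat) (c : int -> int).

Lemma psum_ltD1 l : psum_lt N c (l + 1) = psum_le N c l.
Proof. by apply: eq_bigl => i; rewrite ltzD1. Qed.

Lemma psum_le_tsum l : N%:Z <= l -> psum_le N c l = tsum N c.
Proof.
move=> N_le_l; rewrite /psum_le /tsum big_mkcond; apply: eq_big_seq => i.
by rewrite mem_window => /andP[_ i_le_N]; rewrite (le_trans i_le_N N_le_l).
Qed.

Hypothesis c_supp : forall i : int, N%:Z < `|i| -> c i = 0.

Lemma psum_le_lt l : psum_le N c l = psum_lt N c l + c l.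
Proof.
have [l_in|l_notin] := boolP (l \in window N); last first.
  rewrite c_supp ?addr0; last by move: l_notin; rewrite mem_window; lia.
  rewrite /psum_le /psum_lt big_seq_cond [RHS]big_seq_cond; apply: eq_bigl => i.
  have [i_in|//] := boolP (i \in window N); rewrite le_eqVlt.
  by case: eqP => // i_eq; rewrite -i_eq i_in in l_notin.
rewrite /psum_le /psum_lt !(big_mkcond (fun i => _ _ l)) /=.
rewrite !(bigD1_seq l) ?window_uniq //= lexx ltxx add0r addrC; congr (_ + _).
by apply: eq_bigr => i i_neq_l; rewrite le_eqVlt (negbTE i_neq_l).
Qed.

Hypothesis c_ge0 : forall i, 0 <= c i.

Lemma psum_le_ge0 l : 0 <= psum_le N c l.
Proof. exact: sumr_ge0. Qed.

Lemma psum_lt_ge0 l : 0 <= psum_lt N c l.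
Proof. exact: sumr_ge0. Qed.

Lemma psum_le_homo l1 l2 : l1 <= l2 -> psum_le N c l1 <= psum_le N c l2.
Proof.
move=> le_l12; rewrite /psum_le !(big_mkcond (fun i => i <= _)) ler_sum // => i _.
by case: ifP => [/le_trans->//|_]; case: ifP.
Qed.

Lemma psum_le_le_tsum l : psum_le N c l <= tsum N c.
Proof. by rewrite /tsum (bigID (fun i => i <= l)) /= lerDl sumr_ge0. Qed.

Lemma le_psum_le i l : i <= l -> c i <= psum_le N c l.
Proof.
move=> le_il; have := psum_le_homo le_il; apply: le_trans.
by rewrite psum_le_lt lerDr psum_lt_ge0.
Qed.

Lemma le_psum_lt i l : i < l -> c i <= psum_lt N c l.
Proof. by move=> lt_il; rewrite -(subrK 1 l) psum_ltD1 le_psum_le // -ltzD1 subrK. Qed.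

End PartialSums.

Section SortedRepetition.
Variables (N : nat) (c : int -> int).
Hypothesis c_ge0 : forall i, 0 <= c i.

Lemma count_Sseq (P : pred int) :
  (count P (Sseq N c))%:Z = \sum_(i <- window N | P i) c i.
Proof.
rewrite count_flatten_nseq -[LHS]intz sumMz; apply: eq_bigr => i _.
by rewrite intz gez0_abs.
Qed.

Lemma Sat_lt alpha l : (1 <= alpha)%N -> alpha%:Z <= tsum N c ->
  (Sat N c alpha < l) = (alpha%:Z <= psum_lt N c l).
Proof.
move=> alpha_gt0 alpha_le; rewrite /Sat sorted_nth_lt.
- rewrite -ltz_nat count_Sseq; change (\sum_(i <- _ | _) _) with (psum_lt N c l).
  by apply/idP/idP; lia.
- by apply: sorted_flatten_nseq; apply: window_sorted.
rewrite -ltz_nat -count_predT count_Sseq.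
by change (\sum_(i <- _ | _) _) with (tsum N c); lia.
Qed.

Lemma Sat_le alpha l : (1 <= alpha)%N -> alpha%:Z <= tsum N c ->
  (Sat N c alpha <= l) = (alpha%:Z <= psum_le N c l).
Proof. by move=> alpha_gt0 alpha_le; rewrite -ltzD1 Sat_lt // psum_ltD1. Qed.

End SortedRepetition.

Section Equivalence.
Variables (N : nat) (a b : int -> int).
Hypotheses (a_supp : forall i : int, N%:Z < `|i| -> a i = 0)
           (b_supp : forall i : int, N%:Z < `|i| -> b i = 0).

Definition cond1 :=
  exists sigma : int,
    [/\ a sigma - b sigma != 0, (forall l, l < sigma -> a l - b l = 0),
        (forall l, l < sigma -> a l = 0),
        a sigma = a sigma - b sigma /\ 0 < a sigma - b sigma &
        (forall l, sigma < l ->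
           Num.max (a l - b l) 0 <= a l /\
           a l < psum_le N (fun i => a i - b i) l)].

Definition cond2 :=
  exists sigma : int,
    [/\ a sigma != 0, (forall l, l < sigma -> a l = 0),
        (forall i, 0 <= a i /\ 0 <= b i),
        (forall i, i <= sigma -> b i = 0) &
        (forall l, sigma < l -> psum_le N b l < psum_lt N a l)].

Definition cond3 :=
  [/\ (forall i, 0 <= a i /\ 0 <= b i),
      tsum N b < tsum N a &
      (forall alpha beta : nat,
         inR (tsum N a) (tsum N b) alpha beta ->
         alpha%:Z - 1 <= beta%:Z ->
         inL N a b alpha beta)].

Lemma psum_le_sub l :
  psum_le N (fun i => a i - b i) l = psum_lt N a l + a l - psum_le N b l.
Proof. by rewrite -psum_le_lt // /psum_le sumrB. Qed.

Lemma cond1_cond2 : cond1 -> cond2.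
Proof.
case=> sigma [q_sigma q_lt a_lt [a_sigma q_sigma_gt0] q_gt]; exists sigma; split.
- by rewrite a_sigma.
- exact: a_lt.
- move=> i; case: (ltgtP i sigma) => [i_lt|i_gt|->]; last by lia.
    by have := q_lt _ i_lt; have := a_lt _ i_lt; lia.
  by have [] := q_gt _ i_gt; rewrite ge_max => /andP[]; lia.
- move=> i; rewrite le_eqVlt => /predU1P[->|i_lt]; first by lia.
  by have := q_lt _ i_lt; have := a_lt _ i_lt; lia.
- by move=> l l_gt; have [_] := q_gt _ l_gt; rewrite psum_le_sub; lia.
Qed.

Lemma cond2_cond1 : cond2 -> cond1.
Proof.
case=> sigma [a_sigma a_lt ab_ge0 b_le psum_gt]; exists sigma.
have b_sigma := b_le _ (lexx sigma); have [a_sigma_ge0 _] := ab_ge0 sigma; split.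
- by lia.
- by move=> l l_lt; rewrite a_lt // b_le // ltW.
- exact: a_lt.
- by lia.
- move=> l l_gt; have := psum_gt _ l_gt; have := ab_ge0 l.
  by rewrite psum_le_sub ge_max; lia.
Qed.

Lemma cond2_cond3 : cond2 -> cond3.
Proof.
case=> sigma [a_sigma a_lt ab_ge0 b_le psum_gt].
have a_ge0 i : 0 <= a i by case: (ab_ge0 i).
have b_ge0 i : 0 <= b i by case: (ab_ge0 i).
have psum_b_sigma : psum_le N b sigma = 0 by apply: big1 => i /b_le.
split=> //.
  have sigma_le_N : sigma <= N%:Z.
    by case: (lerP sigma N%:Z) => // N_lt; move: a_sigma; rewrite a_supp //; lia.
  have := psum_gt (N%:Z + 1); rewrite psum_ltD1 !psum_le_tsum //; lia.
move=> alpha beta [alpha_gt0 alpha_le beta_gt0 beta_le] alpha_le_beta; split=> //.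
set L := Sat N b beta.
have beta_le_L : beta%:Z <= psum_le N b L by rewrite -Sat_le.
have sigma_lt_L : sigma < L.
  by case: (ltP sigma L) => // /(psum_le_homo N b_ge0); lia.
by rewrite Sat_lt //; have := psum_gt _ sigma_lt_L; lia.
Qed.

Section FromLattice.
Hypotheses (a_ge0 : forall i, 0 <= a i) (b_ge0 : forall i, 0 <= b i)
           (tsum_lt : tsum N b < tsum N a)
           (staircase : forall alpha beta : nat,
              inR (tsum N a) (tsum N b) alpha beta ->
              alpha%:Z - 1 <= beta%:Z -> inL N a b alpha beta).

Lemma staircase_psum_lt l :
  0 < psum_le N b l -> psum_le N b l < psum_lt N a l.
Proof.
move=> psum_gt0; have := psum_le_le_tsum N b_ge0 l.
set k := `|psum_le N b l|%N; have k_eq : psum_le N b l = k%:Z by lia.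
rewrite k_eq => k_le; have k_gt0 : (0 < k)%N by lia.
have [_] := staircase (alpha := k.+1) (beta := k) ltac:(split; lia) ltac:(lia).
have Sb_le : Sat N b k <= l by rewrite Sat_le // k_eq.
by move/lt_le_trans/(_ Sb_le); rewrite Sat_lt //; lia.
Qed.

Lemma lattice_cond2 : cond2.
Proof.
have tsum_b_ge0 : 0 <= tsum N b by apply: sumr_ge0.
have tsum_a_gt0 : 1 <= tsum N a by lia.
set sigma := Sat N a 1; exists sigma.
have psum_a_sigma : psum_lt N a sigma = 0.
  have := Sat_lt a_ge0 (alpha := 1) sigma isT tsum_a_gt0.
  by rewrite ltxx; have := psum_lt_ge0 N a_ge0 sigma; lia.
have a_sigma_gt0 : 0 < a sigma.
  have := Sat_le a_ge0 (alpha := 1) sigma isT tsum_a_gt0.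
  by rewrite lexx psum_le_lt //; lia.
have psum_b_sigma : psum_le N b sigma = 0.
  by have := staircase_psum_lt (l := sigma); have := psum_le_ge0 N b_ge0 sigma; lia.
split.
- by rewrite gt_eqF.
- by move=> l /(le_psum_lt a_supp a_ge0); have := a_ge0 l; lia.
- by [].
- by move=> i /(le_psum_le b_supp b_ge0); have := b_ge0 i; lia.
move=> l sigma_lt_l; have [psum_b0|psum_b_gt0] := eqVneq (psum_le N b l) 0.
  by have := le_psum_lt a_supp a_ge0 sigma_lt_l; lia.
by apply: staircase_psum_lt; have := psum_le_ge0 N b_ge0 l; lia.
Qed.

End FromLattice.

Lemma cond3_cond2 : cond3 -> cond2.
Proof.
by case=> ab_ge0 tsum_lt staircase; apply: lattice_cond2 => // i; case: (ab_ge0 i).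
Qed.

End Equivalence.

Theorem lemma5p1p1 (a b : int -> int) (N : nat)
  (Hsupp : forall i : int, N%:Z < `|i| -> a i = 0 /\ b i = 0) :
  let q := fun i => a i - b i in
  let cond1 :=
    exists sigma : int,
      [/\ q sigma != 0, (forall l, l < sigma -> q l = 0),
          (forall l, l < sigma -> a l = 0),
          a sigma = q sigma /\ 0 < q sigma &
          (forall l, sigma < l ->
             Num.max (q l) 0 <= a l /\ a l < psum_le N q l)] in
  let cond2 :=
    exists sigma : int,
      [/\ a sigma != 0, (forall l, l < sigma -> a l = 0),
          (forall i, 0 <= a i /\ 0 <= b i),
          (forall i, i <= sigma -> b i = 0) &
          (forall l, sigma < l -> psum_le N b l < psum_lt N a l)] in
  let cond3 :=
    [/\ (forall i, 0 <= a i /\ 0 <= b i),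
        tsum N b < tsum N a &
        (forall alpha beta : nat,
           inR (tsum N a) (tsum N b) alpha beta ->
           alpha%:Z - 1 <= beta%:Z ->
           inL N a b alpha beta)] in
  (cond1 <-> cond2) /\ (cond2 <-> cond3).
Proof.
have a_supp i : N%:Z < `|i| -> a i = 0 by case/Hsupp.
have b_supp i : N%:Z < `|i| -> b i = 0 by case/Hsupp.
split; split.
- exact: cond1_cond2.
- exact: cond2_cond1.
- exact: cond2_cond3.
- exact: cond3_cond2.
Qed.
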